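(* Let $f:M\to\mathbb{R}^{0,2,1}$ be a non-degenerate $d$-minimal surface. Then $\iota\circ f:M\to\mathbb{R}^4_1$ is a spacelike, flat, zero mean curvature surface in $\mathbb{R}^4_1$.
   Context: $\mathbb{R}^{0,2,1}$ denotes $\mathbb{R}^3$ with coordinates $(x,y,z)$ and the degenerate form $(\cdot,\cdot)=dx^2+dy^2$. A non-degenerate immersion has positive definite induced metric $g=f^*(\cdot,\cdot)$. With $\xi=(0,0,1)$ and $d$ the standard flat connection of $\mathbb{R}^3$, writing $d_X(df(Y))=df(\nabla_XY)+h(X,Y)\xi$ ($\nabla$ the Levi-Civita connection of $g$) defines the second fundamental form $h$, and $f$ is $d$-minimal if $\mathrm{tr}_gh\equiv0$. $\mathbb{R}^4_1$ is $\mathbb{R}^4$ with metric $-dx_1^2+dx_2^2+dx_3^2+dx_4^2$, and $\iota(x,y,z)=(z,x,y,z)$. A surface in $\mathbb{R}^4_1$ is spacelike if its induced metric is positive definite, flat if its Gaussian curvature vanishes, and zero mean curvature if its mean curvature vector field vanishes. *)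

From Stdlib Require Import Reals Lra ClassicalEpsilon.
Open Scope R_scope.

(** * Local coordinates.  A surface is given by a parametrization defined on an
    open subset U of R^2 (coordinates (u,v)). *)

Inductive ix := i1 | i2.

Definition sum2 (F : ix -> R) : R := F i1 + F i2.

Definition has_pd (i : ix) (h : R -> R -> R) (u v l : R) : Prop :=
  match i with
  | i1 => derivable_pt_lim (fun t => h t v) u l
  | i2 => derivable_pt_lim (fun t => h u t) v l
  end.

(** the partial derivative operator (meaningful where the derivative exists) *)
Definition pd (i : ix) (h : R -> R -> R) (u v : R) : R :=
  epsilon (inhabits 0) (fun l => has_pd i h u v l).

Definition open2 (U : R -> R -> Prop) : Prop :=
  forall u v, U u v -> exists r, 0 < r /\
    forall u' v', (u' - u)^2 + (v' - v)^2 < r^2 -> U u' v'.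

Definition cont2_on (U : R -> R -> Prop) (h : R -> R -> R) : Prop :=
  forall u v, U u v -> forall eps, 0 < eps -> exists del, 0 < del /\
    forall u' v', Rabs (u' - u) < del -> Rabs (v' - v) < del ->
      Rabs (h u' v' - h u v) < eps.

Fixpoint Ck (n : nat) (U : R -> R -> Prop) (h : R -> R -> R) : Prop :=
  match n with
  | O => cont2_on U h
  | S m => cont2_on U h /\
           (forall i u v, U u v -> exists l, has_pd i h u v l) /\
           (forall i, Ck m U (pd i h))
  end.

Definition smooth_on (U : R -> R -> Prop) (h : R -> R -> R) : Prop :=
  forall n, Ck n U h.

(** * Riemannian metrics in coordinates: g i j u v *)
Definition metric := ix -> ix -> R -> R -> R.

Definition posdef_on (U : R -> R -> Prop) (g : metric) : Prop :=
  forall u v, U u v -> forall a b, (a <> 0 \/ b <> 0) ->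
    0 < a*a*g i1 i1 u v + a*b*g i1 i2 u v + b*a*g i2 i1 u v + b*b*g i2 i2 u v.

Definition mdet (g : metric) (u v : R) : R :=
  g i1 i1 u v * g i2 i2 u v - g i1 i2 u v * g i2 i1 u v.

Definition ginv (g : metric) (i j : ix) (u v : R) : R :=
  match i, j with
  | i1, i1 => g i2 i2 u v / mdet g u v
  | i2, i2 => g i1 i1 u v / mdet g u v
  | i1, i2 => - g i1 i2 u v / mdet g u v
  | i2, i1 => - g i2 i1 u v / mdet g u v
  end.

Definition Gamma (g : metric) (k i j : ix) (u v : R) : R :=
  /2 * sum2 (fun l => ginv g k l u v *
     (pd i (g j l) u v + pd j (g i l) u v - pd l (g i j) u v)).

(** components of R(d1,d2)d2, with R(X,Y)Z = nabla_X nabla_Y Z - nabla_Y nabla_X Z *)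
Definition Riem122 (g : metric) (l : ix) (u v : R) : R :=
  pd i1 (Gamma g l i2 i2) u v - pd i2 (Gamma g l i1 i2) u v
  + sum2 (fun m => Gamma g m i2 i2 u v * Gamma g l i1 m u v
                   - Gamma g m i1 i2 u v * Gamma g l i2 m u v).

Definition gauss_curv (g : metric) (u v : R) : R :=
  sum2 (fun l => g l i1 u v * Riem122 g l u v) / mdet g u v.

(** * R^{0,2,1}: maps (x,y,z) with degenerate form dx^2+dy^2 *)
Definition g_deg (x y : R -> R -> R) : metric :=
  fun i j u v => pd i x u v * pd j x u v + pd i y u v * pd j y u v.

Definition nondeg_immersion (U : R -> R -> Prop) (x y z : R -> R -> R) : Prop :=
  smooth_on U x /\ smooth_on U y /\ smooth_on U z /\ posdef_on U (g_deg x y).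

(** d_{d_i}(df(d_j)) = df(nabla_{d_i} d_j) + h(d_i,d_j) xi, xi = (0,0,1),
    and tr_g h = 0 *)
Definition d_minimal (U : R -> R -> Prop) (x y z : R -> R -> R) : Prop :=
  exists h : ix -> ix -> R -> R -> R,
    (forall u v, U u v -> forall i j,
       pd i (pd j x) u v = sum2 (fun k => Gamma (g_deg x y) k i j u v * pd k x u v)
                            + h i j u v * 0 /\
       pd i (pd j y) u v = sum2 (fun k => Gamma (g_deg x y) k i j u v * pd k y u v)
                            + h i j u v * 0 /\
       pd i (pd j z) u v = sum2 (fun k => Gamma (g_deg x y) k i j u v * pd k z u v)
                            + h i j u v * 1) /\
    (forall u v, U u v ->
       sum2 (fun i => sum2 (fun j => ginv (g_deg x y) i j u v * h i j u v)) = 0).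

(** * Minkowski space R^4_1, coordinates indexed 0..3 *)
Definition ip41 (a b : nat -> R) : R :=
  - a 0%nat * b 0%nat + a 1%nat * b 1%nat + a 2%nat * b 2%nat + a 3%nat * b 3%nat.

Definition iota (x y z : R -> R -> R) : nat -> R -> R -> R :=
  fun k => match k with
           | 0%nat => z | 1%nat => x | 2%nat => y | 3%nat => z
           | _ => fun _ _ => 0 end.

Definition g_ind4 (F : nat -> R -> R -> R) : metric :=
  fun i j u v => ip41 (fun k => pd i (F k) u v) (fun k => pd j (F k) u v).

Definition spacelike (U : R -> R -> Prop) (F : nat -> R -> R -> R) : Prop :=
  posdef_on U (g_ind4 F).

Definition flat (U : R -> R -> Prop) (F : nat -> R -> R -> R) : Prop :=
  forall u v, U u v -> gauss_curv (g_ind4 F) u v = 0.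

(** second fundamental form: normal component of d_i d_j F,
    i.e. minus its orthogonal projection onto span(d_1 F, d_2 F) *)
Definition sff4 (F : nat -> R -> R -> R) (i j : ix) (u v : R) (k : nat) : R :=
  pd i (pd j (F k)) u v
  - sum2 (fun a => sum2 (fun b =>
      ginv (g_ind4 F) a b u v
      * ip41 (fun m => pd i (pd j (F m)) u v) (fun m => pd b (F m) u v)
      * pd a (F k) u v)).

Definition mean_curv4 (F : nat -> R -> R -> R) (u v : R) (k : nat) : R :=
  /2 * sum2 (fun i => sum2 (fun j => ginv (g_ind4 F) i j u v * sff4 F i j u v k)).

Definition zero_mean_curvature (U : R -> R -> Prop) (F : nat -> R -> R -> R) : Prop :=
  forall u v, U u v -> forall k, (k < 4)%nat -> mean_curv4 F u v k = 0.

From Stdlib Require Import Reals Lra Lia FunctionalExtensionality ClassicalEpsilon.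
From Coquelicot Require Import Coquelicot.
(* Imported after Coquelicot, whose [iota] would otherwise shadow the one of Defs. *)
From Pilot Require Import Defs.
Open Scope R_scope.

(* The inner product of R^4_1 pulled back by iota is dx^2 + dy^2, since the two
   z-coordinates cancel; so iota o f is spacelike with the same metric g as f.
   As xi = (0,0,1) has no x- and y-components, the Gauss formula of f says that
   x and y satisfy d_i d_j c = Gamma^k_ij d_k c; equality of mixed third partials
   then forces R^l_122 d_l x = R^l_122 d_l y = 0, which kills g(R(d1,d2)d2, d1).
   Finally iota(xi) = (1,0,0,1) is orthogonal to the tangent plane, so the second
   fundamental form of iota o f is h iota(xi) and its trace vanishes with tr_g h. *)

Lemma Rabs_lt_sqr (t r : R) : Rabs t < r -> t ^ 2 < r ^ 2.
Proof. intros H. rewrite <- (pow2_abs t). pose proof (Rabs_pos t). nra. Qed.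

Lemma open2_box (U : R -> R -> Prop) u v : open2 U -> U u v ->
  exists d, 0 < d /\ forall a b, Rabs (a - u) < d -> Rabs (b - v) < d -> U a b.
Proof.
  intros HU Huv. destruct (HU u v Huv) as [r [Hr H]]. exists (r / 2). split; [lra|].
  intros a b Ha Hb. apply H. apply Rabs_lt_sqr in Ha. apply Rabs_lt_sqr in Hb. nra.
Qed.

Definition ex_pd (i : ix) (h : R -> R -> R) (u v : R) : Prop := exists l, has_pd i h u v l.

Lemma pd_unique i h u v l : has_pd i h u v l -> pd i h u v = l.
Proof.
  intros H. unfold pd.
  pose proof (epsilon_spec (inhabits 0) (fun l => has_pd i h u v l) (ex_intro _ l H)) as He.
  destruct i; eapply uniqueness_limite; eauto.
Qed.

Lemma has_pd_pd i h u v : ex_pd i h u v -> has_pd i h u v (pd i h u v).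
Proof. intros [l H]. rewrite (pd_unique _ _ _ _ _ H). exact H. Qed.

Lemma has_pd_plus i f g u v lf lg : has_pd i f u v lf -> has_pd i g u v lg ->
  has_pd i (fun a b => f a b + g a b) u v (lf + lg).
Proof. destruct i; apply derivable_pt_lim_plus. Qed.

Lemma has_pd_minus i f g u v lf lg : has_pd i f u v lf -> has_pd i g u v lg ->
  has_pd i (fun a b => f a b - g a b) u v (lf - lg).
Proof. destruct i; apply derivable_pt_lim_minus. Qed.

Lemma has_pd_mult i f g u v lf lg : has_pd i f u v lf -> has_pd i g u v lg ->
  has_pd i (fun a b => f a b * g a b) u v (lf * g u v + f u v * lg).
Proof. destruct i; apply derivable_pt_lim_mult. Qed.

Lemma has_pd_div i f g u v lf lg : has_pd i f u v lf -> has_pd i g u v lg -> g u v <> 0 ->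
  has_pd i (fun a b => f a b / g a b) u v ((lf * g u v - lg * f u v) / (g u v)²).
Proof. destruct i; intros Hf Hg Hg0; exact (derivable_pt_lim_div _ _ _ _ _ Hf Hg Hg0). Qed.

Lemma ex_pd_minus i f g u v : ex_pd i f u v -> ex_pd i g u v ->
  ex_pd i (fun a b => f a b - g a b) u v.
Proof. intros [lf Hf] [lg Hg]. eexists. apply has_pd_minus; eauto. Qed.

Lemma ex_pd_mult i f g u v : ex_pd i f u v -> ex_pd i g u v ->
  ex_pd i (fun a b => f a b * g a b) u v.
Proof. intros [lf Hf] [lg Hg]. eexists. apply has_pd_mult; eauto. Qed.

Lemma ex_pd_div i f g u v : ex_pd i f u v -> ex_pd i g u v -> g u v <> 0 ->
  ex_pd i (fun a b => f a b / g a b) u v.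
Proof. intros [lf Hf] [lg Hg] Hg0. eexists. apply has_pd_div; eauto. Qed.

Lemma has_pd_ext_open U i f g u v l : open2 U -> U u v ->
  (forall a b, U a b -> f a b = g a b) -> has_pd i f u v l -> has_pd i g u v l.
Proof.
  intros HU Huv Hfg Hf. destruct (open2_box U u v HU Huv) as [d [Hd Hbox]].
  destruct i; apply is_derive_Reals; apply is_derive_Reals in Hf;
    refine (is_derive_ext_loc _ _ _ _ _ Hf); exists (mkposreal d Hd); intros t Ht;
    apply Hfg, Hbox; try exact Ht; rewrite Rminus_eq_0, Rabs_R0; exact Hd.
Qed.

Lemma ex_pd_ext_open U i f g u v : open2 U -> U u v ->
  (forall a b, U a b -> f a b = g a b) -> ex_pd i f u v -> ex_pd i g u v.
Proof. intros HU Huv Hfg [l Hf]. exists l. exact (has_pd_ext_open U i f g u v l HU Huv Hfg Hf). Qed.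

Lemma Derive_pd i f a b : ex_pd i f a b ->
  match i with i1 => Derive (fun t => f t b) a | i2 => Derive (fun t => f a t) b end
  = pd i f a b.
Proof.
  intros H. apply has_pd_pd in H.
  destruct i; apply is_derive_unique; apply is_derive_Reals; exact H.
Qed.

Lemma ex_derive_pd i f a b : ex_pd i f a b ->
  match i with i1 => ex_derive (fun t => f t b) a | i2 => ex_derive (fun t => f a t) b end.
Proof. intros [l H]. destruct i; exists l; apply is_derive_Reals; exact H. Qed.

Lemma continuity_2d_pt_open U F G u v : open2 U -> U u v ->
  (forall a b, U a b -> F a b = G a b) -> cont2_on U G -> continuity_2d_pt F u v.
Proof.
  intros HU Huv HFG HG eps. destruct (HG u v Huv eps (cond_pos eps)) as [d1 [Hd1 H1]].
  destruct (open2_box U u v HU Huv) as [d2 [Hd2 H2]].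
  exists (mkposreal (Rmin d1 d2) (Rmin_pos _ _ Hd1 Hd2)). simpl. intros a b Ha Hb.
  pose proof (Rmin_l d1 d2). pose proof (Rmin_r d1 d2).
  rewrite !HFG; auto; [apply H1; lra | apply H2; lra].
Qed.

Lemma pd_comm_C2 U f u v : open2 U -> U u v -> Ck 2 U f ->
  pd i1 (pd i2 f) u v = pd i2 (pd i1 f) u v.
Proof.
  intros HU Huv [_ [Hf Hf2]].
  destruct (Hf2 i1) as [_ [Hf1d Hf1c]]. destruct (Hf2 i2) as [_ [Hf2d Hf2c]].
  assert (D2 : forall a b, U a b -> Derive (fun t => f a t) b = pd i2 f a b).
  { intros a b Hab. apply (Derive_pd i2). apply Hf; auto. }
  assert (D1 : forall a b, U a b -> Derive (fun t => f t b) a = pd i1 f a b).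
  { intros a b Hab. apply (Derive_pd i1). apply Hf; auto. }
  assert (H12 : forall a b, U a b ->
    has_pd i1 (fun a b => Derive (fun t => f a t) b) a b (pd i1 (pd i2 f) a b)).
  { intros a b Hab. apply (has_pd_ext_open U i1 (pd i2 f)); auto.
    - intros; symmetry; auto.
    - apply has_pd_pd, Hf2d; auto. }
  assert (H21 : forall a b, U a b ->
    has_pd i2 (fun a b => Derive (fun t => f t b) a) a b (pd i2 (pd i1 f) a b)).
  { intros a b Hab. apply (has_pd_ext_open U i2 (pd i1 f)); auto.
    - intros; symmetry; auto.
    - apply has_pd_pd, Hf1d; auto. }
  assert (D12 : forall a b, U a b ->
    Derive (fun s => Derive (fun t => f s t) b) a = pd i1 (pd i2 f) a b).
  { intros a b Hab. apply is_derive_unique, is_derive_Reals, H12; auto. }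
  assert (D21 : forall a b, U a b ->
    Derive (fun s => Derive (fun t => f t s) a) b = pd i2 (pd i1 f) a b).
  { intros a b Hab. apply is_derive_unique, is_derive_Reals, H21; auto. }
  rewrite <- D12, <- D21 by auto. apply Schwarz.
  - destruct (open2_box U u v HU Huv) as [d [Hd Hbox]]. exists (mkposreal d Hd).
    intros a b Ha Hb. pose proof (Hbox a b Ha Hb) as Hab. repeat split.
    + apply (ex_derive_pd i1). apply Hf; auto.
    + apply (ex_derive_pd i2). apply Hf; auto.
    + exists (pd i1 (pd i2 f) a b). apply is_derive_Reals, H12; auto.
    + exists (pd i2 (pd i1 f) a b). apply is_derive_Reals, H21; auto.
  - exact (continuity_2d_pt_open U _ _ u v HU Huv D12 (Hf2c i1)).
  - exact (continuity_2d_pt_open U _ _ u v HU Huv D21 (Hf1c i2)).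
Qed.

Lemma smooth_on_pd U h : smooth_on U h ->
  (forall k d a b, U a b -> ex_pd d (pd k h) a b) /\
  (forall i j d a b, U a b -> ex_pd d (pd i (pd j h)) a b) /\
  (forall j, Ck 2 U (pd j h)).
Proof.
  intros S. destruct (S 3%nat) as [_ [_ H3]]. split; [|split].
  - intros k d a b Hab. destruct (H3 k) as [_ [H _]]. apply H; auto.
  - intros i j d a b Hab. destruct (H3 j) as [_ [_ H]]. destruct (H i) as [_ [H' _]].
    apply H'; auto.
  - exact H3.
Qed.

Lemma posdef_mdet_pos (U : R -> R -> Prop) (g : metric) u v : posdef_on U g -> U u v ->
  g i1 i2 u v = g i2 i1 u v -> 0 < mdet g u v.
Proof.
  intros Hg Huv Hsym.
  pose proof (Hg u v Huv 1 0 (or_introl R1_neq_R0)) as Hg11.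
  assert (Hnz : g i1 i1 u v <> 0) by nra.
  (* the quadratic form at (-g12, g11) equals g11 * det g *)
  pose proof (Hg u v Huv (- g i1 i2 u v) (g i1 i1 u v) (or_intror Hnz)) as Hq.
  unfold mdet. rewrite Hsym in *. nra.
Qed.

Lemma ginv_contract (g : metric) u v (c : ix -> R) a :
  mdet g u v <> 0 -> g i1 i2 u v = g i2 i1 u v ->
  sum2 (fun b => ginv g a b u v * sum2 (fun l => c l * g l b u v)) = c a.
Proof.
  intros Hdet Hsym. unfold ginv, sum2. unfold mdet in *.
  rewrite Hsym in *. destruct a; field; exact Hdet.
Qed.

Definition jacobian (x y : R -> R -> R) (u v : R) : R :=
  pd i1 x u v * pd i2 y u v - pd i2 x u v * pd i1 y u v.

Lemma mdet_g_deg (x y : R -> R -> R) u v : mdet (g_deg x y) u v = jacobian x y u v ^ 2.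
Proof. unfold mdet, g_deg, jacobian. ring. Qed.

Lemma jacobian_neq0 (U : R -> R -> Prop) (x y : R -> R -> R) u v :
  posdef_on U (g_deg x y) -> U u v -> jacobian x y u v <> 0.
Proof.
  intros Hp Huv HJ.
  assert (Hdet : 0 < mdet (g_deg x y) u v) by (apply (posdef_mdet_pos U); auto;
    unfold g_deg; ring).
  rewrite mdet_g_deg, HJ in Hdet. lra.
Qed.

Lemma g_ind4_iota (x y z : R -> R -> R) : g_ind4 (iota x y z) = g_deg x y.
Proof.
  extensionality i; extensionality j; extensionality u; extensionality v.
  unfold g_ind4, g_deg, ip41; simpl; ring.
Qed.

(* Cramer's rule for Gamma^k_ij from the x- and y-components of the Gauss formula. *)
Definition christoffel_cramer (x y : R -> R -> R) (k i j : ix) : R -> R -> R :=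
  match k with
  | i1 => fun a b => (pd i (pd j x) a b * pd i2 y a b - pd i (pd j y) a b * pd i2 x a b)
                     / jacobian x y a b
  | i2 => fun a b => (pd i1 x a b * pd i (pd j y) a b - pd i1 y a b * pd i (pd j x) a b)
                     / jacobian x y a b
  end.

Section GaussFormula.

Variables (U : R -> R -> Prop) (x y : R -> R -> R) (G : ix -> ix -> ix -> R -> R -> R).
Hypothesis HU : open2 U.
Hypothesis Sx : smooth_on U x.
Hypothesis Sy : smooth_on U y.
Hypothesis Hp : posdef_on U (g_deg x y).
Hypothesis Hgauss : forall a b, U a b -> forall i j,
  pd i (pd j x) a b = sum2 (fun k => G k i j a b * pd k x a b) /\
  pd i (pd j y) a b = sum2 (fun k => G k i j a b * pd k y a b).

Lemma christoffel_cramerE a b k i j : U a b -> christoffel_cramer x y k i j a b = G k i j a b.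
Proof.
  intros Hab. pose proof (jacobian_neq0 U x y a b Hp Hab) as HJ.
  destruct (Hgauss a b Hab i j) as [Ex Ey]. unfold sum2 in Ex, Ey.
  unfold jacobian in HJ.
  destruct k; cbn [christoffel_cramer]; unfold jacobian; rewrite Ex, Ey; field; exact HJ.
Qed.

Lemma ex_pd_christoffel u v k i j d : U u v -> ex_pd d (G k i j) u v.
Proof.
  intros Huv.
  destruct (smooth_on_pd U x Sx) as [X1 [X2 _]].
  destruct (smooth_on_pd U y Sy) as [Y1 [Y2 _]].
  apply (ex_pd_ext_open U d (christoffel_cramer x y k i j)); auto.
  { intros a b Hab. apply christoffel_cramerE; exact Hab. }
  assert (DJ : ex_pd d (jacobian x y) u v)
    by (apply ex_pd_minus; apply ex_pd_mult; auto).
  pose proof (jacobian_neq0 U x y u v Hp Huv) as HJ.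
  destruct k; simpl; apply ex_pd_div; auto; apply ex_pd_minus; apply ex_pd_mult; auto.
Qed.

End GaussFormula.

(* Differentiating d_j d_2 c = Gamma^k_2j d_k c once more and comparing the two
   expressions of d_1 d_2 d_2 c = d_2 d_1 d_2 c leaves exactly R^l_122 d_l c. *)
Lemma Riem122_annihilates (U : R -> R -> Prop) (g : metric) (c : R -> R -> R) u v :
  open2 U -> U u v ->
  (forall a b, U a b -> forall i j,
     pd i (pd j c) a b = sum2 (fun k => Gamma g k i j a b * pd k c a b)) ->
  (forall k i j d, ex_pd d (Gamma g k i j) u v) ->
  (forall k d, ex_pd d (pd k c) u v) ->
  pd i1 (pd i2 (pd i2 c)) u v = pd i2 (pd i1 (pd i2 c)) u v ->
  sum2 (fun l => Riem122 g l u v * pd l c u v) = 0.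
Proof.
  intros HU Huv Hgauss HG Hc Hcomm.
  assert (Hthird : forall d i j, has_pd d (pd i (pd j c)) u v
     (pd d (Gamma g i1 i j) u v * pd i1 c u v + Gamma g i1 i j u v * pd d (pd i1 c) u v +
     (pd d (Gamma g i2 i j) u v * pd i2 c u v + Gamma g i2 i j u v * pd d (pd i2 c) u v))).
  { intros d i j.
    apply (has_pd_ext_open U d
      (fun a b => Gamma g i1 i j a b * pd i1 c a b + Gamma g i2 i j a b * pd i2 c a b)); auto.
    - intros a b Hab. rewrite Hgauss by auto. reflexivity.
    - apply has_pd_plus; apply has_pd_mult; apply has_pd_pd; auto. }
  rewrite (pd_unique _ _ _ _ _ (Hthird i1 i2 i2)),
          (pd_unique _ _ _ _ _ (Hthird i2 i1 i2)) in Hcomm.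
  rewrite !Hgauss in Hcomm by auto.
  unfold Riem122, sum2 in *. lra.
Qed.

Lemma gauss_curv_g_deg_eq0 (x y : R -> R -> R) u v :
  sum2 (fun l => Riem122 (g_deg x y) l u v * pd l x u v) = 0 ->
  sum2 (fun l => Riem122 (g_deg x y) l u v * pd l y u v) = 0 ->
  gauss_curv (g_deg x y) u v = 0.
Proof.
  unfold gauss_curv, sum2. intros Hx Hy.
  set (R1 := Riem122 (g_deg x y) i1 u v) in *. set (R2 := Riem122 (g_deg x y) i2 u v) in *.
  unfold g_deg.
  replace ((pd i1 x u v * pd i1 x u v + pd i1 y u v * pd i1 y u v) * R1 +
           (pd i2 x u v * pd i1 x u v + pd i2 y u v * pd i1 y u v) * R2)
    with (pd i1 x u v * (R1 * pd i1 x u v + R2 * pd i2 x u v)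
          + pd i1 y u v * (R1 * pd i1 y u v + R2 * pd i2 y u v)) by ring.
  rewrite Hx, Hy. unfold Rdiv. ring.
Qed.

Lemma flat_g_deg (U : R -> R -> Prop) (x y : R -> R -> R) :
  open2 U -> smooth_on U x -> smooth_on U y -> posdef_on U (g_deg x y) ->
  (forall a b, U a b -> forall i j,
     pd i (pd j x) a b = sum2 (fun k => Gamma (g_deg x y) k i j a b * pd k x a b) /\
     pd i (pd j y) a b = sum2 (fun k => Gamma (g_deg x y) k i j a b * pd k y a b)) ->
  forall u v, U u v -> gauss_curv (g_deg x y) u v = 0.
Proof.
  intros HU Sx Sy Hp Hgauss u v Huv.
  pose proof (fun k i j d => ex_pd_christoffel U x y _ HU Sx Sy Hp Hgauss u v k i j d Huv) as HG.
  destruct (smooth_on_pd U x Sx) as [X1 [_ X3]].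
  destruct (smooth_on_pd U y Sy) as [Y1 [_ Y3]].
  apply gauss_curv_g_deg_eq0; apply (Riem122_annihilates U); auto;
    solve [ intros a b Hab i j; apply Hgauss; auto | apply (pd_comm_C2 U); auto ].
Qed.

Lemma g_ind4_sym (F : nat -> R -> R -> R) u v : g_ind4 F i1 i2 u v = g_ind4 F i2 i1 u v.
Proof. unfold g_ind4, ip41. ring. Qed.

(* The projection in [sff4] fixes tangent vectors and kills vectors orthogonal
   to the tangent plane. *)
Lemma sff4_normal_part (F : nat -> R -> R -> R) i j u v (c : ix -> R) (n : nat -> R) k :
  mdet (g_ind4 F) u v <> 0 ->
  (forall m, (m < 4)%nat ->
     pd i (pd j (F m)) u v = sum2 (fun l => c l * pd l (F m) u v) + n m) ->
  (forall b, ip41 n (fun m => pd b (F m) u v) = 0) ->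
  (k < 4)%nat ->
  sff4 F i j u v k = n k.
Proof.
  intros Hdet Hsplit Hn Hk.
  assert (Hip : forall b, ip41 (fun m => pd i (pd j (F m)) u v) (fun m => pd b (F m) u v)
                          = sum2 (fun l => c l * g_ind4 F l b u v)).
  { intros b. transitivity (sum2 (fun l => c l * g_ind4 F l b u v)
                            + ip41 n (fun m => pd b (F m) u v)); [| rewrite Hn; ring].
    unfold g_ind4, ip41, sum2. cbv beta. rewrite !Hsplit by lia. unfold sum2. ring. }
  unfold sff4.
  replace (fun a => sum2 (fun b => ginv (g_ind4 F) a b u v
             * ip41 (fun m => pd i (pd j (F m)) u v) (fun m => pd b (F m) u v)
             * pd a (F k) u v))
    with (fun a => c a * pd a (F k) u v).
  - rewrite Hsplit by exact Hk. unfold sum2. ring.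
  - extensionality a. rewrite <- (ginv_contract (g_ind4 F) u v c a Hdet (g_ind4_sym F u v)).
    unfold sum2 at 1 3. rewrite !Hip. unfold sum2. ring.
Qed.

Definition iota_xi (k : nat) : R :=
  match k with 0%nat | 3%nat => 1 | _ => 0 end.

Lemma zero_mean_curvature_iota (U : R -> R -> Prop) (x y z : R -> R -> R) :
  posdef_on U (g_deg x y) -> d_minimal U x y z -> zero_mean_curvature U (iota x y z).
Proof.
  intros Hp [h [Hgauss Htr]] u v Huv k Hk.
  assert (Hsff : forall i j, sff4 (iota x y z) i j u v k = h i j u v * iota_xi k).
  { intros i j.
    apply (sff4_normal_part _ i j u v (fun l => Gamma (g_deg x y) l i j u v)
                                      (fun m => h i j u v * iota_xi m)); auto.
    - rewrite g_ind4_iota, mdet_g_deg. apply pow_nonzero, (jacobian_neq0 U); auto.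
    - intros m Hm. destruct (Hgauss u v Huv i j) as [Ex [Ey Ez]].
      destruct m as [|[|[|[|m]]]]; [exact Ez | exact Ex | exact Ey | exact Ez | lia].
    - intros b. unfold ip41. simpl. ring. }
  unfold mean_curv4. rewrite g_ind4_iota.
  transitivity (/ 2 * sum2 (fun i => sum2 (fun j => ginv (g_deg x y) i j u v * h i j u v))
                * iota_xi k).
  - unfold sum2. rewrite !Hsff. ring.
  - rewrite Htr by exact Huv. ring.
Qed.

Lemma d_minimal_gauss_xy (U : R -> R -> Prop) (x y z : R -> R -> R) :
  d_minimal U x y z -> forall a b, U a b -> forall i j,
     pd i (pd j x) a b = sum2 (fun k => Gamma (g_deg x y) k i j a b * pd k x a b) /\
     pd i (pd j y) a b = sum2 (fun k => Gamma (g_deg x y) k i j a b * pd k y a b).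
Proof.
  intros [h [Hgauss _]] a b Hab i j. destruct (Hgauss a b Hab i j) as [Ex [Ey _]].
  rewrite Rmult_0_r, Rplus_0_r in Ex, Ey. split; assumption.
Qed.

Theorem mainTheorem16 (U : R -> R -> Prop) (x y z : R -> R -> R) :
  open2 U ->
  nondeg_immersion U x y z ->
  d_minimal U x y z ->
  spacelike U (iota x y z) /\ flat U (iota x y z) /\
  zero_mean_curvature U (iota x y z).
Proof.
  intros HU [Sx [Sy [_ Hp]]] Hmin. split; [|split].
  - unfold spacelike. rewrite g_ind4_iota. exact Hp.
  - unfold flat. rewrite g_ind4_iota.
    exact (flat_g_deg U x y HU Sx Sy Hp (d_minimal_gauss_xy U x y z Hmin)).
  - exact (zero_mean_curvature_iota U x y z Hp Hmin).
Qed.
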